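(* Let $\bm{L}_t\in\mathbb{R}^{n_1\times n_1}$ and $\bm{R}_t\in\mathbb{R}^{n_2\times n_2}$ be diagonal matrices with positive diagonal entries. For any $\bm{A}\in\mathbb{R}^{n_1\times n_1}$, $\bm{B}\in\mathbb{R}^{n_1\times n_2}$ and $\bm{C}\in\mathbb{R}^{n_2\times n_2}$, $$\|\bm{A}\bm{B}\|_{\mathcal{W}_t}\le\|\bm{A}\|_{\bm{L}_t^{1/4}}\|\bm{B}\|_{\mathcal{W}_t}\quad\text{and}\quad \|\bm{B}\bm{C}\|_{\mathcal{W}_t}\le\mathrm{cond}(\bm{R}_t^{-1/4})\,\|\bm{B}\|_{\mathcal{W}_t}\,\|\bm{C}\|_{\bm{R}_t^{1/4}}.$$
   Context: $\|\bm{Z}\|_{\mathcal{W}_t}^2=\langle\bm{L}_t^{1/4}\bm{Z}\bm{R}_t^{1/4},\bm{Z}\rangle$ (equivalently $\|\bm{Z}\|_{\mathcal{W}_t}=\|\bm{L}_t^{1/8}\bm{Z}\bm{R}_t^{1/8}\|_F$). For a symmetric positive definite $\bm{M}$ of size $k$, $\|\bm{x}\|_{\bm{M}}=\langle\bm{M}\bm{x},\bm{x}\rangle^{1/2}$ on $\mathbb{R}^k$ and for $\bm{A}\in\mathbb{R}^{k\times k}$, $\|\bm{A}\|_{\bm{M}}=\sup_{\bm{x}\neq0}\|\bm{A}\bm{x}\|_{\bm{M}}/\|\bm{x}\|_{\bm{M}}$. $\mathrm{cond}(\bm{Z})=\sigma_{\max}(\bm{Z})/\sigma_{\min}(\bm{Z})$.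 In the paper $\bm{L}_t=\epsilon_t\bm{I}+\mathrm{diag}(\bm{G}_t\bm{G}_t^T)$, $\bm{R}_t=\epsilon_t\bm{I}+\mathrm{diag}(\bm{G}_t^T\bm{G}_t)$, $\epsilon_t>0$. *)

From HB Require Import structures.
From mathcomp Require Import all_boot all_order all_algebra.
From mathcomp Require Import boolp classical_sets reals.
Set Implicit Arguments. Unset Strict Implicit. Unset Printing Implicit Defensive.
Import Order.TTheory GRing.Theory Num.Theory.
Local Open Scope ring_scope.
Local Open Scope classical_set_scope.

Section Defs.
Variable R : realType.

Definition pos_diag_mx n (M : 'M[R]_n) : Prop :=
  is_diag_mx M /\ forall i, 0 < M i i.

Definition mxpow14 n (M : 'M[R]_n) : 'M[R]_n :=
  diag_mx (\row_i Num.sqrt (Num.sqrt (M i i))).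
Definition mxpow18 n (M : 'M[R]_n) : 'M[R]_n :=
  diag_mx (\row_i Num.sqrt (Num.sqrt (Num.sqrt (M i i)))).
Definition mxpowm14 n (M : 'M[R]_n) : 'M[R]_n :=
  diag_mx (\row_i (Num.sqrt (Num.sqrt (M i i)))^-1).

Definition frob_dot m n (X Y : 'M[R]_(m, n)) : R :=
  \sum_i \sum_j X i j * Y i j.

Definition Wnorm n1 n2 (L : 'M[R]_n1) (Rm : 'M[R]_n2) (Z : 'M[R]_(n1, n2)) : R :=
  Num.sqrt (frob_dot (mxpow14 L *m Z *m mxpow14 Rm) Z).

Definition vMnorm k (M : 'M[R]_k) (x : 'cV[R]_k) : R :=
  Num.sqrt (\sum_i (M *m x) i 0 * x i 0).

Definition opMnorm k (M : 'M[R]_k) (A : 'M[R]_k) : R :=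
  sup [set vMnorm M (A *m x) / vMnorm M x | x in [set x : 'cV[R]_k | x != 0]].

Definition euclid k (x : 'cV[R]_k) : R := Num.sqrt (\sum_i x i 0 ^+ 2).

Definition sigma_max k (Z : 'M[R]_k) : R :=
  sup [set euclid (Z *m x) / euclid x | x in [set x : 'cV[R]_k | x != 0]].
Definition sigma_min k (Z : 'M[R]_k) : R :=
  inf [set euclid (Z *m x) / euclid x | x in [set x : 'cV[R]_k | x != 0]].

Definition cond k (Z : 'M[R]_k) : R := sigma_max Z / sigma_min Z.

End Defs.

(* With l = diag(L^{1/4}) and r = diag(R^{1/4}), ||Z||_W^2 is the weighted
   Frobenius sum  sum_ij l_i r_j Z_ij^2 = sum_j r_j ||Z e_j||_l^2, so a bound
   ||A x||_l <= ||A||_l ||x||_l applied column by column gives the first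
   inequality.  Since ||Z||_W = ||Z^T||_W with the roles of L and R swapped,
   the second one reduces to bounding ||C^T||_r.  Since
   r_min |x|^2 <= ||x||_r^2 <= r_max |x|^2 and C, C^T have the same Euclidean
   operator norm, ||C^T||_r <= (r_max / r_min) ||C||_r; and r_max / r_min is
   exactly cond(R^{-1/4}), the extreme singular values of a positive diagonal matrix
   being its extreme entries. *)

From HB Require Import structures.
From mathcomp Require Import all_boot all_order all_algebra.
From mathcomp Require Import boolp classical_sets reals.
From mathcomp Require Import ring lra.
Import Order.TTheory GRing.Theory Num.Theory.
Local Open Scope ring_scope.
Local Open Scope classical_set_scope.
Set Implicit Arguments. Unset Strict Implicit. Unset Printing Implicit Defensive.

Section FiniteSums.
Variables (R : realDomainType) (n : nat).

Lemma sqr_sum_mul_le (a b : 'I_n -> R) :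
  (\sum_i a i * b i) ^+ 2 <= (\sum_i a i ^+ 2) * (\sum_i b i ^+ 2).
Proof.
have lagrange : \sum_i \sum_j (a i * b j - a j * b i) ^+ 2 =
    2 * ((\sum_i a i ^+ 2) * (\sum_i b i ^+ 2) - (\sum_i a i * b i) ^+ 2).
  have sqr_sumE : (\sum_i a i * b i) ^+ 2 = \sum_i \sum_j a i * b i * (a j * b j).
    by rewrite expr2 mulr_suml; apply: eq_bigr => i _; rewrite mulr_sumr.
  have prodE : (\sum_i a i ^+ 2) * (\sum_i b i ^+ 2) = \sum_i \sum_j a i ^+ 2 * b j ^+ 2.
    by rewrite mulr_suml; apply: eq_bigr => i _; rewrite mulr_sumr.
  have prodE' : (\sum_i a i ^+ 2) * (\sum_i b i ^+ 2) = \sum_i \sum_j a j ^+ 2 * b i ^+ 2.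
    by rewrite prodE exchange_big.
  rewrite (_ : forall P S : R, 2 * (P - S) = P + P - 2 * S); last by move=> P S; ring.
  rewrite {1}prodE prodE' sqr_sumE mulr_sumr.
  rewrite -big_split -sumrB; apply: eq_bigr => i _.
  rewrite mulr_sumr -big_split -sumrB; apply: eq_bigr => j _ /=; ring.
have : 0 <= \sum_i \sum_j (a i * b j - a j * b i) ^+ 2.
  by apply: sumr_ge0 => i _; apply: sumr_ge0 => j _; apply: sqr_ge0.
rewrite lagrange; lra.
Qed.

Lemma ler_sqr_nneg (x y : R) : 0 <= y -> x ^+ 2 <= y ^+ 2 -> x <= y.
Proof.
move=> y_ge0 le_sqr; apply: le_trans (ler_norm x) _.
by rewrite -ler_sqr ?nnegrE ?normr_ge0 // real_normK ?num_real.
Qed.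

End FiniteSums.

Section Norms.
Variable R : realType.

Lemma vMnorm_ge0 n (M : 'M[R]_n) x : 0 <= vMnorm M x.
Proof. exact: sqrtr_ge0. Qed.

Lemma vMnorm0 n (M : 'M[R]_n) : vMnorm M 0 = 0.
Proof. by rewrite /vMnorm mulmx0 big1 ?sqrtr0 // => i _; rewrite mxE mul0r. Qed.

Lemma euclid_ge0 n (x : 'cV[R]_n) : 0 <= euclid x.
Proof. exact: sqrtr_ge0. Qed.

Lemma euclid_sqr n (x : 'cV[R]_n) : euclid x ^+ 2 = \sum_i x i 0 ^+ 2.
Proof. by rewrite sqr_sqrtr // sumr_ge0 // => i _; apply: sqr_ge0. Qed.

Lemma euclid_gt0 n (x : 'cV[R]_n) : x != 0 -> 0 < euclid x.
Proof.
case/cV0Pn => i xi_neq0; rewrite sqrtr_gt0 (bigD1 i) //=.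
apply: lt_le_trans (_ : 0 < x i 0 ^+ 2) _; first by rewrite exprn_even_gt0.
by rewrite lerDl sumr_ge0 // => j _; apply: sqr_ge0.
Qed.

Lemma dot_mul_trmx m n (C : 'M[R]_(m, n)) (w : 'cV_n) (y : 'cV_m) :
  \sum_i (C *m w) i 0 * y i 0 = \sum_j w j 0 * (C^T *m y) j 0.
Proof.
under eq_bigr do rewrite mxE mulr_suml.
rewrite exchange_big; apply: eq_bigr => j _.
by rewrite mxE mulr_sumr; apply: eq_bigr => i _; rewrite mxE mulrCA mulrA.
Qed.

Lemma euclid_mul_sqr_le m n (A : 'M[R]_(m, n)) (x : 'cV_n) :
  euclid (A *m x) ^+ 2 <= (\sum_i \sum_j A i j ^+ 2) * euclid x ^+ 2.
Proof.
rewrite !euclid_sqr mulr_suml; apply: ler_sum => i _.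
by rewrite mxE; apply: sqr_sum_mul_le.
Qed.

(* |C^T y|^2 = <C (C^T y), y> <= |C (C^T y)| |y| <= sqrt k |C^T y| |y|. *)
Lemma euclid_trmx_mul_sqr_le m n (C : 'M[R]_(m, n)) k : 0 <= k ->
    (forall x, euclid (C *m x) ^+ 2 <= k * euclid x ^+ 2) ->
  forall y, euclid (C^T *m y) ^+ 2 <= k * euclid y ^+ 2.
Proof.
move=> k_ge0 C_bound y; set w := C^T *m y; set S := euclid w ^+ 2.
have S_dual : S = \sum_i (C *m w) i 0 * y i 0.
  rewrite dot_mul_trmx /S euclid_sqr; apply: eq_bigr => j _; by rewrite expr2.
have : S * S <= S * (k * euclid y ^+ 2).
  rewrite -expr2 {1}S_dual (le_trans (sqr_sum_mul_le _ _)) //= -!euclid_sqr.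
  by rewrite [S * _]mulrA ler_wpM2r ?sqr_ge0 // mulrC; apply: C_bound.
have [-> _|S_neq0] := eqVneq S 0; first by rewrite mulr_ge0 ?sqr_ge0.
by rewrite ler_pM2l // lt_def S_neq0 sqr_ge0.
Qed.

End Norms.

Lemma ord_extremes (disp : Order.disp_t) (T : orderType disp) n (f : 'I_n.+1 -> T) :
  exists imin imax, forall i, (f imin <= f i <= f imax)%O.
Proof.
have [imin _ min_le] := arg_minP f (P := xpredT) (i0 := ord0) isT.
have [imax _ le_max] := arg_maxP f (P := xpredT) (i0 := ord0) isT.
by exists imin, imax; move=> i; rewrite min_le //=; apply: le_max.
Qed.

Lemma pos_fun_bounds (R : realDomainType) n (f : 'I_n -> R) :
  (forall i, 0 < f i) -> exists dmin dmax,
    [/\ 0 < dmin, 0 < dmax, forall i, dmin <= f i & forall i, f i <= dmax].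
Proof.
case: n f => [|n] f f_gt0; first by exists 1, 1; split => // -[].
have [imin [imax f_bounds]] := ord_extremes f.
by exists (f imin), (f imax); split => // i; case/andP: (f_bounds i).
Qed.

Section DiagonalMatrices.
Variables (R : realType) (n : nat).
Implicit Types (d : 'rV[R]_n) (x : 'cV[R]_n).

Lemma euclid_diag_mul_sqr d x :
  euclid (diag_mx d *m x) ^+ 2 = \sum_i d 0 i ^+ 2 * x i 0 ^+ 2.
Proof. by rewrite euclid_sqr mul_diag_mx; apply: eq_bigr => i _; rewrite mxE exprMn. Qed.

Lemma euclid_diag_mul_delta d j : euclid (diag_mx d *m delta_mx j 0) = `|d 0 j|.
Proof.
rewrite -[LHS]ger0_norm ?sqrtr_ge0 // -sqrtr_sqr euclid_diag_mul_sqr.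
rewrite (bigD1 j) //= big1 ?addr0 => [|i /negbTE ne_ij].
  by rewrite mxE !eqxx expr1n mulr1 sqrtr_sqr.
by rewrite mxE ne_ij expr0n mulr0.
Qed.

Lemma delta_cV_neq0 j : delta_mx j 0 != 0 :> 'cV[R]_n.
Proof. by apply/cV0Pn; exists j; rewrite mxE !eqxx oner_neq0. Qed.

Lemma euclid_delta j : euclid (delta_mx j 0 : 'cV[R]_n) = 1.
Proof.
by rewrite -[delta_mx j 0]mul1mx -diag_const_mx euclid_diag_mul_delta mxE normr1.
Qed.

Lemma vMnorm_diag_sqr d x : (forall i, 0 <= d 0 i) ->
  vMnorm (diag_mx d) x ^+ 2 = \sum_i d 0 i * x i 0 ^+ 2.
Proof.
move=> d_ge0; rewrite /vMnorm mul_diag_mx.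
under eq_bigr do rewrite mxE -mulrA -expr2.
by rewrite sqr_sqrtr // sumr_ge0 // => i _; rewrite mulr_ge0 ?sqr_ge0.
Qed.

Variables (d : 'rV[R]_n).
Hypothesis d_gt0 : forall i, 0 < d 0 i.
Let d_ge0 i : 0 <= d 0 i := ltW (d_gt0 i).

Lemma vMnorm_diag_sqr_le dmax x : (forall i, d 0 i <= dmax) ->
  vMnorm (diag_mx d) x ^+ 2 <= dmax * euclid x ^+ 2.
Proof.
move=> le_dmax; rewrite vMnorm_diag_sqr // euclid_sqr mulr_sumr.
by apply: ler_sum => i _; rewrite ler_wpM2r ?sqr_ge0.
Qed.

Lemma vMnorm_diag_sqr_ge dmin x : (forall i, dmin <= d 0 i) ->
  dmin * euclid x ^+ 2 <= vMnorm (diag_mx d) x ^+ 2.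
Proof.
move=> dmin_le; rewrite vMnorm_diag_sqr // euclid_sqr mulr_sumr.
by apply: ler_sum => i _; rewrite ler_wpM2r ?sqr_ge0.
Qed.

Lemma vMnorm_diag_gt0 x : x != 0 -> 0 < vMnorm (diag_mx d) x.
Proof.
move=> x_neq0; have [dmin [_ [dmin_gt0 _ dmin_le _]]] := pos_fun_bounds d_gt0.
rewrite -ltr_sqr ?nnegrE ?sqrtr_ge0 // expr0n /=.
apply: lt_le_trans (vMnorm_diag_sqr_ge x dmin_le).
by rewrite mulr_gt0 ?exprn_gt0 ?euclid_gt0.
Qed.

Lemma has_ubound_opMnorm_ratios A :
  has_ubound [set vMnorm (diag_mx d) (A *m x) / vMnorm (diag_mx d) x
             | x in [set x | x != 0]].
Proof.
have [dmin [dmax [dmin_gt0 dmax_gt0 dmin_le le_dmax]]] := pos_fun_bounds d_gt0.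
have F_ge0 : 0 <= \sum_i \sum_j A i j ^+ 2.
  by apply: sumr_ge0 => i _; apply: sumr_ge0 => j _; apply: sqr_ge0.
exists (Num.sqrt (dmax * (\sum_i \sum_j A i j ^+ 2) / dmin)) => _ [x x_neq0 <-].
rewrite ler_pdivrMr ?vMnorm_diag_gt0 //; apply: (ler_sqr_nneg (x := vMnorm _ _)).
  by rewrite mulr_ge0 ?vMnorm_ge0 ?sqrtr_ge0.
rewrite exprMn [X in X * _]sqr_sqrtr; last first.
  exact: divr_ge0 (mulr_ge0 (ltW dmax_gt0) F_ge0) (ltW dmin_gt0).
rewrite -!mulrA.
apply: le_trans (vMnorm_diag_sqr_le _ le_dmax) _; apply: ler_wpM2l; first exact: ltW.
apply: le_trans (euclid_mul_sqr_le A x) _; apply: ler_wpM2l => //.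
by rewrite ler_pdivlMl // vMnorm_diag_sqr_ge.
Qed.

Lemma vMnorm_diag_mul_le A x :
  vMnorm (diag_mx d) (A *m x) <= opMnorm (diag_mx d) A * vMnorm (diag_mx d) x.
Proof.
have [->|x_neq0] := eqVneq x 0; first by rewrite mulmx0 !vMnorm0 mulr0.
rewrite -ler_pdivrMr ?vMnorm_diag_gt0 //.
by apply: ub_le_sup; [exact: has_ubound_opMnorm_ratios | exists x].
Qed.

Lemma opMnorm_diag_ge0 A : 0 <= opMnorm (diag_mx d) A.
Proof.
have [[x x_neq0]|no_x] := pselect (exists x, x != 0).
  apply: le_trans (_ : 0 <= vMnorm (diag_mx d) (A *m x) / vMnorm (diag_mx d) x) _.
    by rewrite divr_ge0 ?vMnorm_ge0.
  by apply: ub_le_sup; [exact: has_ubound_opMnorm_ratios | exists x].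
by rewrite /opMnorm sup_out // => -[[_ [x x_neq0 _]] _]; apply: no_x; exists x.
Qed.

Variables (imin imax : 'I_n).
Hypothesis d_extremes : forall i, d 0 imin <= d 0 i <= d 0 imax.
Local Notation dmin := (d 0 imin).
Local Notation dmax := (d 0 imax).

Let dmin_le i : dmin <= d 0 i. Proof. by case/andP: (d_extremes i). Qed.
Let le_dmax i : d 0 i <= dmax. Proof. by case/andP: (d_extremes i). Qed.

Lemma vMnorm_diag_trmx_mul_le C y :
  vMnorm (diag_mx d) (C^T *m y) <=
    dmax / dmin * opMnorm (diag_mx d) C * vMnorm (diag_mx d) y.
Proof.
set K := opMnorm _ C; have K_ge0 : 0 <= K := opMnorm_diag_ge0 C.
have dmin_gt0 := d_gt0 imin; have dmax_ge0 := d_ge0 imax.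
have euclid_le_vMnorm x : euclid x ^+ 2 <= dmin^-1 * vMnorm (diag_mx d) x ^+ 2.
  by rewrite ler_pdivlMl // vMnorm_diag_sqr_ge.
pose k := dmin^-1 * (K ^+ 2 * dmax).
have k_ge0 : 0 <= k by rewrite mulr_ge0 ?invr_ge0 ?mulr_ge0 ?sqr_ge0 ?(ltW dmin_gt0).
have C_bound x : euclid (C *m x) ^+ 2 <= k * euclid x ^+ 2.
  rewrite /k -mulrA ler_pdivlMl //.
  apply: le_trans (vMnorm_diag_sqr_ge _ dmin_le) _.
  apply: le_trans (_ : _ <= K ^+ 2 * vMnorm (diag_mx d) x ^+ 2) _.
    rewrite -exprMn; apply: lerXn2r; rewrite ?nnegrE ?mulr_ge0 ?vMnorm_ge0 //.
    exact: vMnorm_diag_mul_le.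
  by rewrite -[X in _ <= X]mulrA; apply: ler_wpM2l; rewrite ?sqr_ge0 ?vMnorm_diag_sqr_le.
apply: (ler_sqr_nneg (x := vMnorm _ _)).
  by rewrite !mulr_ge0 ?vMnorm_ge0 ?invr_ge0 ?(ltW dmin_gt0).
apply: le_trans (vMnorm_diag_sqr_le _ le_dmax) _.
apply: le_trans (ler_wpM2l dmax_ge0 (euclid_trmx_mul_sqr_le k_ge0 C_bound y)) _.
apply: le_trans (ler_wpM2l dmax_ge0 (ler_wpM2l k_ge0 (euclid_le_vMnorm y))) _.
by rewrite le_eqVlt; apply/orP; left; apply/eqP; rewrite /k; ring.
Qed.

Lemma euclid_diag_mul_ratio x : x != 0 ->
  dmin <= euclid (diag_mx d *m x) / euclid x <= dmax.
Proof.
move=> x_neq0; have euclid_x_gt0 := euclid_gt0 x_neq0.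
rewrite ler_pdivlMr // ler_pdivrMr //; apply/andP; split.
  apply: ler_sqr_nneg; first exact: euclid_ge0.
  rewrite exprMn euclid_diag_mul_sqr euclid_sqr mulr_sumr.
  apply: ler_sum => i _; apply: ler_wpM2r; first exact: sqr_ge0.
  by apply: lerXn2r; rewrite ?nnegrE ?d_ge0.
apply: ler_sqr_nneg; first by rewrite mulr_ge0 ?euclid_ge0.
rewrite exprMn euclid_diag_mul_sqr euclid_sqr mulr_sumr.
apply: ler_sum => i _; apply: ler_wpM2r; first exact: sqr_ge0.
by apply: lerXn2r; rewrite ?nnegrE ?d_ge0.
Qed.

Lemma diag_mul_delta_ratio j :
  euclid (diag_mx d *m delta_mx j 0) / euclid (delta_mx j 0) = d 0 j.
Proof. by rewrite euclid_diag_mul_delta euclid_delta divr1 ger0_norm. Qed.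

Lemma sigma_max_diag_mx : sigma_max (diag_mx d) = dmax.
Proof.
have le_dmax' :
    ubound [set euclid (diag_mx d *m x) / euclid x | x in [set x | x != 0]] dmax.
  by move=> _ [x x_neq0 <-]; case/andP: (euclid_diag_mul_ratio x_neq0).
apply/le_anti/andP; split.
  apply: ge_sup le_dmax'.
  by exists dmax, (delta_mx imax 0); rewrite /= ?delta_cV_neq0 ?diag_mul_delta_ratio.
apply: ub_le_sup; first by exists dmax.
by exists (delta_mx imax 0); rewrite /= ?delta_cV_neq0 ?diag_mul_delta_ratio.
Qed.

Lemma sigma_min_diag_mx : sigma_min (diag_mx d) = dmin.
Proof.
have dmin_le' :
    lbound [set euclid (diag_mx d *m x) / euclid x | x in [set x | x != 0]] dmin.
  by move=> _ [x x_neq0 <-]; case/andP: (euclid_diag_mul_ratio x_neq0).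
apply/le_anti/andP; split; last first.
  apply: lb_le_inf dmin_le'.
  by exists dmin, (delta_mx imin 0); rewrite /= ?delta_cV_neq0 ?diag_mul_delta_ratio.
apply: ge_inf; first by exists dmin.
by exists (delta_mx imin 0); rewrite /= ?delta_cV_neq0 ?diag_mul_delta_ratio.
Qed.

Lemma cond_diag_mx : cond (diag_mx d) = dmax / dmin.
Proof. by rewrite /cond sigma_max_diag_mx sigma_min_diag_mx. Qed.

End DiagonalMatrices.

Lemma cond_diag_mx_inv (R : realType) n (d : 'rV[R]_n) imin imax :
    (forall i, 0 < d 0 i) -> (forall i, d 0 imin <= d 0 i <= d 0 imax) ->
  cond (diag_mx (\row_i (d 0 i)^-1)) = d 0 imax / d 0 imin.
Proof.
move=> d_gt0 d_extremes.
rewrite (@cond_diag_mx _ _ _ _ imax imin) ?mxE ?invrK 1?mulrC //.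
  by move=> i; rewrite mxE invr_gt0.
move=> i; rewrite !mxE !lef_pV2 ?posrE //.
by case/andP: (d_extremes i) => -> ->.
Qed.

Lemma col_mul (R : pzRingType) m n p (j : 'I_p) (A : 'M[R]_(m, n)) (B : 'M_(n, p)) :
  col j (A *m B) = A *m col j B.
Proof. by rewrite !colE mulmxA. Qed.

Section FourthRoots.
Variable R : realType.

Definition root4_diag n (M : 'M[R]_n) : 'rV[R]_n := \row_i Num.sqrt (Num.sqrt (M i i)).

Lemma mxpow14E n (M : 'M[R]_n) : mxpow14 M = diag_mx (root4_diag M).
Proof. by []. Qed.

Lemma mxpowm14E n (M : 'M[R]_n) :
  mxpowm14 M = diag_mx (\row_i (root4_diag M 0 i)^-1).
Proof. by congr diag_mx; apply/rowP => i; rewrite !mxE. Qed.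

Lemma root4_diag_ge0 n (M : 'M[R]_n) i : 0 <= root4_diag M 0 i.
Proof. by rewrite mxE sqrtr_ge0. Qed.

Lemma root4_diag_gt0 n (M : 'M[R]_n) : pos_diag_mx M -> forall i, 0 < root4_diag M 0 i.
Proof. by case=> _ M_gt0 i; rewrite mxE !sqrtr_gt0. Qed.

Lemma Wnorm_sqr n1 n2 (L : 'M[R]_n1) (Rt : 'M[R]_n2) Z :
  Wnorm L Rt Z ^+ 2 =
    \sum_i \sum_j root4_diag L 0 i * root4_diag Rt 0 j * Z i j ^+ 2.
Proof.
rewrite /Wnorm /frob_dot !mxpow14E mul_mx_diag mul_diag_mx.
transitivity
  (Num.sqrt (\sum_i \sum_j root4_diag L 0 i * root4_diag Rt 0 j * Z i j ^+ 2) ^+ 2).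
  congr (Num.sqrt _ ^+ 2); apply: eq_bigr => i _; apply: eq_bigr => j _.
  by rewrite !mxE; ring.
rewrite sqr_sqrtr // sumr_ge0 // => i _; rewrite sumr_ge0 // => j _.
by rewrite mulr_ge0 ?sqr_ge0 // mulr_ge0 ?root4_diag_ge0.
Qed.

Lemma Wnorm_trmx n1 n2 (L : 'M[R]_n1) (Rt : 'M[R]_n2) Z :
  Wnorm Rt L Z^T = Wnorm L Rt Z.
Proof.
rewrite -[LHS]ger0_norm ?sqrtr_ge0 // -[RHS]ger0_norm ?sqrtr_ge0 //.
rewrite -!sqrtr_sqr !Wnorm_sqr exchange_big; congr Num.sqrt.
apply: eq_bigr => i _; apply: eq_bigr => j _.
by rewrite [Z^T _ _]mxE (mulrC (root4_diag Rt 0 j)).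
Qed.

Lemma Wnorm_sqr_col n1 n2 (L : 'M[R]_n1) (Rt : 'M[R]_n2) Z :
  Wnorm L Rt Z ^+ 2 =
    \sum_j root4_diag Rt 0 j * vMnorm (mxpow14 L) (col j Z) ^+ 2.
Proof.
rewrite Wnorm_sqr exchange_big; apply: eq_bigr => j _.
rewrite mxpow14E (vMnorm_diag_sqr _ (@root4_diag_ge0 _ L)) mulr_sumr.
by apply: eq_bigr => i _; rewrite [col j Z i 0]mxE [RHS]mulrCA [RHS]mulrA.
Qed.

Lemma Wnorm_le_col n1 n2 (L : 'M[R]_n1) (Rt : 'M[R]_n2) Z Z' c : 0 <= c ->
    (forall j, vMnorm (mxpow14 L) (col j Z) <= c * vMnorm (mxpow14 L) (col j Z')) ->
  Wnorm L Rt Z <= c * Wnorm L Rt Z'.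
Proof.
move=> c_ge0 le_cols; apply: ler_sqr_nneg; first by rewrite mulr_ge0 ?sqrtr_ge0.
rewrite exprMn !Wnorm_sqr_col mulr_sumr; apply: ler_sum => j _.
rewrite [X in _ <= X]mulrCA; apply: ler_wpM2l; first exact: root4_diag_ge0.
rewrite -exprMn; apply: lerXn2r; rewrite ?nnegrE ?mulr_ge0 ?vMnorm_ge0 //.
Qed.

End FourthRoots.

Theorem lemma3p5 (R : realType) (n1 n2 : nat)
  (L : 'M[R]_n1) (Rt : 'M[R]_n2)
  (hL : pos_diag_mx L) (hR : pos_diag_mx Rt)
  (A : 'M[R]_n1) (B : 'M[R]_(n1, n2)) (C : 'M[R]_n2) :
  Wnorm L Rt (A *m B) <= opMnorm (mxpow14 L) A * Wnorm L Rt B /\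
  Wnorm L Rt (B *m C) <= cond (mxpowm14 Rt) * Wnorm L Rt B * opMnorm (mxpow14 Rt) C.
Proof.
have L14_gt0 := root4_diag_gt0 hL; have R14_gt0 := root4_diag_gt0 hR.
split.
  apply: Wnorm_le_col; first exact: opMnorm_diag_ge0.
  by move=> j; rewrite col_mul; apply: vMnorm_diag_mul_le.
case: n2 Rt hR B C R14_gt0 => [|n2] Rt _ B C R14_gt0.
  have Wnorm0 (Z : 'M[R]_(n1, 0)) : Wnorm L Rt Z = 0.
    by rewrite /Wnorm /frob_dot big1 ?sqrtr0 // => i _; rewrite big_ord0.
  by rewrite !Wnorm0 mulr0 mul0r.
have [jmin [jmax R14_extremes]] := ord_extremes (root4_diag Rt 0).
rewrite mxpowm14E (cond_diag_mx_inv R14_gt0 R14_extremes) mulrAC.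
rewrite -!(Wnorm_trmx L) trmx_mul.
apply: Wnorm_le_col.
  by rewrite !mulr_ge0 ?invr_ge0 ?root4_diag_ge0 ?opMnorm_diag_ge0.
by move=> i; rewrite col_mul; apply: vMnorm_diag_trmx_mul_le.
Qed.
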